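(* For all integers $u\ge 4$, $$3\,C_{24}^{(3\cdot 2^u)}\equiv C_0+2^{u-2}C_1 \pmod{2^u},$$ where $C_0=\mathrm{Circ}(2,0,0,0,0,0,0,0,-1,0,0,0,0,0,0,0,-1,0,0,0,0,0,0,0)$ and $C_1=\mathrm{Circ}(2,0,2,0,1,0,2,0,1,0,0,0,2,0,0,0,1,0,2,0,1,0,2,0)$.
   Context: For integers $k,i\ge0$, $C_k^{(i)}$ is the $k\times k$ integer matrix $\big(\sum_{\alpha\in\mathbb{Z}}\binom{i}{\alpha k+r-s}\big)_{1\le r,s\le k}$, with $\binom{a}{b}=0$ if $b<0$ or $b>a$. For a $k$-tuple $(u_0,\dots,u_{k-1})$, $\mathrm{Circ}(u_0,\dots,u_{k-1})$ is the $k\times k$ matrix whose $(r,s)$ entry is $u_{(s-r \bmod k)}$. Congruence of matrices is entrywise. *)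

From mathcomp Require Import all_boot all_order all_algebra.
Set Implicit Arguments. Unset Strict Implicit. Unset Printing Implicit Defensive.
Import Order.TTheory GRing.Theory Num.Theory.
Local Open Scope ring_scope.

Definition binz (a : nat) (b : int) : int :=
  match b with Posz n => ('C(a, n))%:Z | Negz _ => 0 end.

(* C_k^{(i)} : entry (r,s) = sum_{alpha in Z} binom(i, alpha*k + r - s).
   Indices r,s are 0-based ('I_k) here; only r - s matters.
   The sum over alpha in Z is taken over alpha in [-(i+1), i+1]; all other
   terms vanish (for k >= 1, |r - s| < k). *)
Definition Cmat (k i : nat) : 'M[int]_k :=
  \matrix_(r < k, s < k)
    \sum_(a < (2 * i + 3)%N)
      binz i (((a%:Z - (i.+1)%:Z) * k%:Z) + r%:Z - s%:Z).

Definition Circ (k : nat) (u : seq int) : 'M[int]_k :=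
  \matrix_(r < k, s < k) nth 0 u ((s + k - r) %% k)%N.

Definition C0 : 'M[int]_24 :=
  Circ 24 [:: 2; 0; 0; 0; 0; 0; 0; 0; -1; 0; 0; 0; 0; 0; 0; 0; -1; 0; 0; 0; 0; 0; 0; 0].
Definition C1 : 'M[int]_24 :=
  Circ 24 [:: 2; 0; 2; 0; 1; 0; 2; 0; 1; 0; 0; 0; 2; 0; 0; 0; 1; 0; 2; 0; 1; 0; 2; 0].

From mathcomp Require Import all_boot all_order all_algebra.
From mathcomp Require Import zify ring.
Set Implicit Arguments.
Unset Strict Implicit.
Unset Printing Implicit Defensive.
Import GRing.Theory.
Local Open Scope ring_scope.

(* Let P be the cyclic shift, so that C_24^(i) = (1 + P)^i, and every circulant
   matrix is a polynomial in P; in particular all matrices below commute.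
   Squaring doubles the 2-adic precision of a congruence between commuting
   matrices: A = B (mod m) with m even gives A^2 = B^2 (mod 2m).  Take
   A = 3 (1 + P)^(3 2^u) and B = C0 + t C1 with t = 2^(u-2).  Since C0^2 = 3 C0,
   C0 C1 = 3 C1 (mod 4) and C1^2 = 0 (mod 2), we get B^2 = 3 (C0 + 2t C1)
   (mod 8t) as soon as 4 | t, and the factor 3 cancels modulo a power of 2.
   The induction starts at u = 4, where (1 + P)^48 is computed modulo 16. *)

Definition congmx {p q : nat} (m : int) (A B : 'M[int]_(p, q)) :=
  exists C : 'M[int]_(p, q), A = B + m *: C.

Section MatrixCongruence.
Variables p q : nat.
Implicit Types (A B C D : 'M[int]_(p, q)) (c d m : int).

Lemma congmxP m A B : congmx m A B <-> forall i j, (A i j = B i j %[mod m])%Z.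
Proof.
split=> [[C ->] i j | eqAB]; first by rewrite !mxE mulrC addrC modzMDl.
exists (\matrix_(i, j) ((A i j - B i j) %/ m)%Z); apply/matrixP => i j.
rewrite !mxE mulrC divzK; first by rewrite addrC subrK.
by rewrite -eqz_mod_dvd eqAB.
Qed.

Lemma congmx_refl m A : congmx m A A.
Proof. by exists 0; rewrite scaler0 addr0. Qed.

Lemma congmx_trans m A B C : congmx m A B -> congmx m B C -> congmx m A C.
Proof. by move=> [D ->] [E ->]; exists (E + D); rewrite scalerDr addrA. Qed.

Lemma congmxD m A B C D : congmx m A B -> congmx m C D -> congmx m (A + C) (B + D).
Proof.
by move=> [E ->] [F ->]; exists (E + F); rewrite scalerDr addrACA.
Qed.

Lemma congmxZ c m A B : congmx m A B -> congmx (c * m) (c *: A) (c *: B).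
Proof. by move=> [C ->]; exists C; rewrite scalerDr scalerA. Qed.

Lemma congmx_dvd d m A B : (d %| m)%Z -> congmx m A B -> congmx d A B.
Proof.
by move=> /dvdzP[e ->] [C ->]; exists (e *: C); rewrite scalerA mulrC.
Qed.

Lemma congmx_cancel c m A B :
  coprimez c m -> congmx m (c *: A) (c *: B) -> congmx m A B.
Proof.
move=> cop /congmxP eqAB; apply/congmxP => i j; apply/eqP.
rewrite coprimez_sym in cop.
rewrite eqz_mod_dvd -(Gauss_dvdzr _ cop) mulrBr -eqz_mod_dvd.
by have := eqAB i j; rewrite !mxE => ->.
Qed.

End MatrixCongruence.

Section SquareMatrixCongruence.
Variable p : nat.
Implicit Types (A B C D : 'M[int]_p.+1) (m : int).

Lemma congmxM m A B C D : congmx m A B -> congmx m C D -> congmx m (A * C) (B * D).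
Proof.
move=> [E ->] [F ->]; exists (B * F + E * D + m *: (E * F)).
by rewrite mulrDl !mulrDr -!scalerAl -!scalerAr !scalerDr scalerA !addrA.
Qed.

Lemma congmx_sqr m A B : (2 %| m)%Z -> GRing.comm A B ->
  congmx m A B -> congmx (2 * m) (A ^+ 2) (B ^+ 2).
Proof.
move=> /dvdzP[h def_m] cAB [C def_A].
have sqr_diff : A ^+ 2 = B ^+ 2 + (A - B) * (A + B).
  by rewrite !expr2 mulrDr !mulrBl cAB subrKA addrC subrK.
have diff_AB : A - B = m *: C by rewrite def_A addrAC subrr add0r.
exists (C * B + h *: (C * C)); rewrite sqr_diff diff_AB def_A.
rewrite -scalerAl !mulrDr -!scalerAr !scalerDr !scalerA addrAC -scalerDr.
rewrite -mulr2n -scalerMnr scalerMnl -mulr_natl.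
suff -> : m * m = 2 * m * h by [].
by rewrite {1}def_m -mulrA mulrC.
Qed.
End SquareMatrixCongruence.

Definition cconv (k : nat) (u v : seq int) : seq int :=
  mkseq (fun j => foldr +%R 0 [seq u`_i * v`_((j + k - i) %% k) | i <- iota 0 k]) k.

Definition sqr_mod (k : nat) (m : int) (u : seq int) : seq int :=
  [seq (x %% m)%Z | x <- cconv k u u].

Definition onehot (i : nat) : seq int := rcons (nseq i 0) 1.

Lemma nth_onehot i j : (onehot i)`_j = (j == i)%:R.
Proof. by rewrite nth_rcons size_nseq nth_nseq; case: ltngtP. Qed.

Lemma binz_sum m (t : int) :
  binz m t = \sum_(j < m.+1) (t == j%:Z)%:R *+ 'C(m, j).
Proof.
case: t => [i|i] /=; last by rewrite big1 // => j _; rewrite mul0rn.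
have [ltim | leim] := ltnP i m.+1.
  rewrite (bigD1 (Ordinal ltim)) //= eqxx big1 ?addr0 ?natz // => j neq_ji.
  by have /negbTE : (j : nat) != i := neq_ji; rewrite eqz_nat eq_sym => ->; exact: mul0rn.
rewrite bin_small //; symmetry; apply: big1 => j _.
by rewrite eqz_nat gtn_eqF ?mul0rn // (leq_trans (ltn_ord j)).
Qed.

Lemma sum_window_indicator (k m r s j : nat) : (r < k)%N -> (s < k)%N -> (j <= m)%N ->
  \sum_(a < 2 * m + 3) ((((a : nat)%:Z - m.+1%:Z) * k%:Z + r%:Z - s%:Z) == j%:Z)%:R
    = (r == s + j %[mod k])%:R :> int.
Proof.
move=> ltrk ltsk lejm; have k_gt0 : (0 < k)%N by apply: leq_ltn_trans ltrk.
have [hr | hr] := boolP (r == s + j %[mod k]).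
  set q := ((s + j) %/ k)%N.
  have def_sj : (s + j = q * k + r)%N by rewrite {1}(divn_eq (s + j) k) -(eqP hr) modn_small.
  have ltq : (q + m + 1 < 2 * m + 3)%N by nia.
  rewrite (bigD1 (Ordinal ltq)) //= big1 ?addr0.
    have hit_j : ((q + m + 1)%:Z - m.+1%:Z) * k%:Z + r%:Z - s%:Z = j%:Z by lia.
    by rewrite hit_j eqxx.
  move=> a neq_a; rewrite (_ : _ == _ = false) //; apply/eqP => def_j.
  by apply: (negP neq_a); apply/eqP/val_inj => /=; nia.
rewrite big1 // => a _; rewrite (_ : _ == _ = false) //; apply/eqP => def_j.
apply: (negP hr); rewrite -eqz_nat -!modz_nat.
have -> : (s + j)%N%:Z = ((a : nat)%:Z - m.+1%:Z) * k + r by rewrite PoszD -def_j; lia.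
by rewrite modzMDl.
Qed.

Section Circulant.
Variable n : nat.
Local Notation k := n.+1.
Implicit Types (u v : seq int) (r s : 'I_k).

Lemma val_Zp_sub (x y : 'I_k) : (x - y : 'I_k) = ((x + k - y) %% k)%N :> nat.
Proof. by rewrite /= modnDmr addnBA // ltnW. Qed.

Lemma CircE u r s : Circ k u r s = u`_((s - r)%R : 'I_k).
Proof. by rewrite mxE val_Zp_sub. Qed.

Lemma Circ_comm u v : GRing.comm (Circ k u) (Circ k v).
Proof.
rewrite /GRing.comm -!mulmxE; apply/matrixP => r s; rewrite !mxE.
rewrite (reindex_inj (inj_comp (addrI (s + r)) oppr_inj)) /=.
apply: eq_bigr => l _; rewrite !CircE mulrC addrAC addrK.
by rewrite opprD addrA subKr.
Qed.

Lemma mul_Circ u v : Circ k u *m Circ k v = Circ k (cconv k u v).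
Proof.
apply/matrixP => r s; rewrite !mxE nth_mkseq ?ltn_pmod // foldrE big_map.
rewrite -[iota 0 k]/(index_iota 0 k) big_mkord.
rewrite (reindex_inj (addIr r)) /=; apply: eq_bigr => i _.
by rewrite !CircE addrK opprD addrA addrAC !val_Zp_sub.
Qed.

Lemma Circ_mkseq f r s : Circ k (mkseq f k) r s = f ((s - r)%R : 'I_k).
Proof. by rewrite CircE nth_mkseq. Qed.

Lemma add_Circ u v : Circ k u + Circ k v = Circ k (mkseq (fun i => u`_i + v`_i) k).
Proof. by apply/matrixP => r s; rewrite mxE Circ_mkseq !CircE. Qed.

Lemma scale_Circ c u : c *: Circ k u = Circ k (mkseq (fun i => c * u`_i) k).
Proof. by apply/matrixP => r s; rewrite mxE Circ_mkseq !CircE. Qed.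

Lemma Circ_nil : Circ k [::] = 0.
Proof. by apply/matrixP => r s; rewrite CircE nth_nil mxE. Qed.

Lemma Circ_onehot i r s : (i < k)%N -> Circ k (onehot i) r s = (r + i == s %[mod k])%:R.
Proof.
move=> ltik; rewrite mxE nth_onehot.
suff -> : ((s + k - r) %% k == i)%N = (r + i == s %[mod k]) by [].
rewrite -{1}(modn_small ltik) -[LHS](eqn_modDr r) subnK; last by rewrite ltnW ?ltn_addl.
by rewrite modnDr eq_sym addnC.
Qed.

Definition shiftmx : 'M[int]_k := \matrix_(r, s) ((r : nat) == s + 1 %[mod k])%:R.

Lemma shiftmxX j r s : (shiftmx ^+ j) r s = ((r : nat) == s + j %[mod k])%:R.
Proof.
elim: j r s => [|j IHj] r s.
  by rewrite expr0 mxE addn0 !modn_small.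
rewrite exprSr -mulmxE mxE (bigD1 (inZp (s + 1))) //= big1 ?addr0.
  by rewrite IHj !mxE /= modnDml modn_mod eqxx mulr1 -addnA add1n.
move=> l neq_l; rewrite [shiftmx l s]mxE modn_small //.
by have /negbTE -> : (l : nat) != ((s + 1) %% k)%N by []; rewrite mulr0.
Qed.

Lemma Circ_onehot0 : Circ k (onehot 0) = 1.
Proof. by apply/matrixP => r s; rewrite Circ_onehot // mxE addn0 !modn_small. Qed.

Lemma shiftmx_Circ : shiftmx = Circ k (onehot n).
Proof.
apply/matrixP => r s; rewrite Circ_onehot // mxE.
by rewrite -[(r + n == s %[mod k])%N](eqn_modDr 1) -addnA [(n + 1)%N]addn1 modnDr.
Qed.

Lemma Cmat_exp m : Cmat k m = (1 + shiftmx) ^+ m.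
Proof.
apply/matrixP => r s; rewrite addrC exprD1n summxE mxE.
under [RHS]eq_bigr do rewrite mulmxnE shiftmxX.
under [LHS]eq_bigr do rewrite binz_sum.
rewrite exchange_big /=; apply: eq_bigr => j _; rewrite sumrMnl.
by rewrite sum_window_indicator // -ltnS.
Qed.

Lemma congmx_Circ m u v :
  all (fun j => u`_j == v`_j %[mod m])%Z (iota 0 k) -> congmx m (Circ k u) (Circ k v).
Proof.
move=> /allP eq_uv; apply/congmxP => r s; rewrite !CircE; apply/eqP/eq_uv.
by rewrite mem_iota ltn_ord.
Qed.

Lemma Circ_modz m u : congmx m (Circ k u) (Circ k [seq (x %% m)%Z | x <- u]).
Proof.
apply: congmx_Circ; apply/allP => j _; have [ltj | lej] := ltnP j (size u).
  by rewrite (nth_map 0) // modz_mod eqxx.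
by rewrite !nth_default ?size_map.
Qed.

Lemma Circ_exp2_mod m u j :
  congmx m (Circ k u ^+ (2 ^ j)) (Circ k (iter j (sqr_mod k m) u)).
Proof.
elim: j => [|j IHj]; first by rewrite expr1; apply: congmx_refl.
rewrite expnSr exprM iterS; apply: congmx_trans (Circ_modz _ _).
by rewrite -mul_Circ mulmxE expr2; apply: congmxM.
Qed.

Lemma Cmat_Circ_comm m u : GRing.comm (Cmat k m) (Circ k u).
Proof.
rewrite Cmat_exp shiftmx_Circ -Circ_onehot0 add_Circ.
by apply: commr_sym; apply: commrX; apply: Circ_comm.
Qed.

End Circulant.

Section DyadicLift.
Variables (p : nat) (A0 A1 : 'M[int]_p.+1).
Hypotheses (A0_sqr : A0 ^+ 2 = 3 *: A0) (A0A1_mod4 : congmx 4 (A0 * A1) (3 *: A1)).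
Hypotheses (A1_sqr_mod2 : congmx 2 (A1 ^+ 2) 0) (cA0A1 : GRing.comm A0 A1).

Lemma congmx_lift (Y : 'M[int]_p.+1) (t : int) :
    (4 %| t)%Z -> coprimez 3 t -> GRing.comm Y A0 -> GRing.comm Y A1 ->
  congmx (4 * t) (3 *: Y) (A0 + t *: A1) ->
  congmx (8 * t) (3 *: Y ^+ 2) (A0 + (2 * t) *: A1).
Proof.
move=> t4 t3 YA0 YA1 congY.
have sqrB : (A0 + t *: A1) ^+ 2 = 3 *: A0 + (2 * t) *: (A0 * A1) + t ^+ 2 *: A1 ^+ 2.
  rewrite expr2 mulrDl !mulrDr -!scalerAl -!scalerAr scalerA -cA0A1 -expr2 A0_sqr.
  rewrite [t ^+ 2]expr2 [A1 ^+ 2]expr2; move: (A0 * A1) (A1 * A1) => X Z.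
  by rewrite addrA -[3 *: A0 + t *: X + t *: X]addrA -scalerDl -mulr2n -[t *+ 2]mulr_natl.
have cYB : GRing.comm (3 *: Y) (A0 + t *: A1).
  have cY : GRing.comm Y (A0 + t *: A1).
    apply: commrD => //; rewrite -mulr_algl; apply: commrM => //.
    by apply: commr_sym; apply: comm_alg.
  rewrite -[3 *: Y]mulr_algl; apply: commr_sym; apply: commrM; apply: commr_sym => //.
  exact: comm_alg.
have sqr_congr : congmx (8 * t) ((3 *: Y) ^+ 2) (3 *: (A0 + (2 * t) *: A1)).
  rewrite (_ : 8 * t = 2 * (4 * t)); last by rewrite mulrA.
  apply: congmx_trans (congmx_sqr _ cYB congY) _; first exact: dvdz_mulr.
  have -> : 3 *: (A0 + (2 * t) *: A1) = 3 *: A0 + (2 * t) *: (3 *: A1).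
    by rewrite scalerDr !scalerA mulrC.
  have : congmx (2 * (4 * t)) ((A0 + t *: A1) ^+ 2)
                (3 *: A0 + (2 * t) *: (3 *: A1) + t ^+ 2 *: 0).
    rewrite sqrB; apply: congmxD; first apply: congmxD.
    - exact: congmx_refl.
    - apply: congmx_dvd (congmxZ (2 * t) A0A1_mod4).
      by rewrite (_ : 2 * t * 4 = 2 * (4 * t)) ?dvdzz //; ring.
    - apply: congmx_dvd (congmxZ (t ^+ 2) A1_sqr_mod2).
      by move: t4 => /dvdzP[h ->]; apply/dvdzP; exists h; ring.
  by rewrite scaler0 addr0.
rewrite exprZn expr2 -scalerA in sqr_congr.
by apply: congmx_cancel sqr_congr; rewrite coprimezMr t3 andbT.
Qed.
End DyadicLift.

Lemma C0_sqr : C0 ^+ 2 = 3 *: C0.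
Proof.
by rewrite expr2 -mulmxE /C0 mul_Circ scale_Circ; congr (Circ 24 _).
Qed.

Lemma C0C1_mod4 : congmx 4 (C0 * C1) (3 *: C1).
Proof.
by rewrite -mulmxE mul_Circ scale_Circ; apply: congmx_Circ; vm_compute.
Qed.

Lemma C1_sqr_mod2 : congmx 2 (C1 ^+ 2) 0.
Proof.
by rewrite expr2 -mulmxE mul_Circ -(Circ_nil 23); apply: congmx_Circ; vm_compute.
Qed.

Definition Cmat24_48_row : seq int :=
  [:: 14; 0; 8; 0; 12; 0; 8; 0; 1; 0; 0; 0; 8; 0; 0; 0; 1; 0; 8; 0; 12; 0; 8; 0].

Lemma Cmat24_48_mod16 : congmx 16 (Cmat 24 48) (Circ 24 Cmat24_48_row).
Proof.
rewrite Cmat_exp shiftmx_Circ -Circ_onehot0 add_Circ; set l := mkseq _ 24.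
have cube : Circ 24 l ^+ 3 = Circ 24 (cconv 24 l (cconv 24 l l)).
  by rewrite !exprS expr0 mulr1 -!mulmxE !mul_Circ.
(* Reducing modulo 16 after each squaring keeps the unary integers small. *)
have -> : Cmat24_48_row = iter 4 (sqr_mod 24 16) (cconv 24 l (cconv 24 l l)).
  by rewrite /l; vm_compute.
by rewrite (_ : 48 = 3 * 2 ^ 4)%N // exprM cube; apply: Circ_exp2_mod.
Qed.

Lemma Cmat24_base : congmx 16 (3 *: Cmat 24 48) (C0 + 4 *: C1).
Proof.
apply: congmx_trans (congmx_dvd _ (congmxZ 3 Cmat24_48_mod16)) _.
  exact: dvdz_mull (dvdzz 16).
by rewrite /C0 /C1 !scale_Circ add_Circ; apply: congmx_Circ; vm_compute.
Qed.

Lemma Cmat24_congr u : (4 <= u)%N ->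
  congmx (2 ^+ u) (3 *: Cmat 24 (3 * 2 ^ u)) (C0 + 2 ^+ (u - 2) *: C1).
Proof.
elim: u => // u IHu; rewrite leq_eqVlt => /orP[/eqP <- | le4u]; first exact: Cmat24_base.
have le2u : (2 <= u - 2)%N by lia.
set t : int := 2 ^+ (u - 2).
have def_t2 : 2 ^+ (u.+1 - 2) = 2 * t by rewrite subSn ?exprS //; lia.
have def_t4 : 2 ^+ u = 4 * t by rewrite (_ : 4 = 2 ^+ 2) // -exprD subnKC //; lia.
have def_t8 : 2 ^+ u.+1 = 8 * t by rewrite exprS def_t4 mulrA.
rewrite def_t2 def_t8 expnSr mulnA Cmat_exp exprM -Cmat_exp.
apply: (congmx_lift C0_sqr C0C1_mod4 C1_sqr_mod2 (Circ_comm _ _ _)).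
- by rewrite /t (_ : 4 = 2 ^+ 2) // dvdz_exp2l.
- exact: coprimezXr.
- exact: Cmat_Circ_comm.
- exact: Cmat_Circ_comm.
- by rewrite -def_t4; apply: IHu.
Qed.

Theorem theorem8 (u : nat) (hu : (4 <= u)%N) :
  forall r s : 'I_24,
    (((3 : int) *: Cmat 24 (3 * 2 ^ u)) r s
       = (C0 + ((2 : int) ^+ (u - 2)) *: C1) r s %[mod (2 : int) ^+ u])%Z.
Proof. by apply/congmxP; apply: Cmat24_congr. Qed.
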